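(* Let $\mathbf A$ be the BBL transformation of a matrix Laurent polynomial of bandwidth $(p,q)$, and let $L\le R$ be finite integers with $R-L\ge\tau$ (non-empty bulk). Then: (i) $\mathbf P_{L,R}\ker\mathbf A\subseteq\mathcal M_{L,R}$; (ii) if the principal coefficients $a_{p'}$ and $a_{q'}$ are both invertible (i.e. $p\le 0\le q$ and $a_p,a_q$ invertible), then $\mathbf P_{L,R}\ker\mathbf A=\mathcal M_{L,R}$.
   Context: Fix $d\ge1$; $\mathbf M_d$ denotes complex $d\times d$ matrices. $\mathcal V^S_d$ is the vector space of all doubly infinite sequences $\Psi=\{\psi_j\}_{j\in\mathbb Z}$ with $\psi_j\in\mathbb C^d$ (no topology). A matrix Laurent polynomial of bandwidth $(p,q)$ is $A(w,w^{-1})=\sum_{r=p}^q a_rw^r$ with integers $p\le q$, $a_r\in\mathbf M_d$, $a_p\neq0\neq a_q$. Its banded block-Laurent (BBL) transformation $\mathbf A$ acts on $\mathcal V^S_d$ by $(\mathbf A\Psi)_j=\sum_{r=p}^q a_r\psi_{j+r}$. Put $p'=\min(p,0)$, $q'=\max(0,q)$, $\tau=q'-p'$. The principal coefficients are $a_{p'}$ (equal to $a_p$ if $p\le0$ and to $0$ if $p>0$) and $a_{q'}$ (equal to $a_q$ if $q\ge0$ and to $0$ if $q<0$). For $-\infty\le L\le R\le\infty$, $\mathcal V_{L,R}\subseteq\mathcal V^S_d$ is the subspace of sequences with $\psi_j=0$ whenever $j<L$ or $j>R$, and $\mathbf P_{L,R}$ is the projection of $\mathcal V^S_d$ onto $\mathcal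 V_{L,R}$ that replaces $\psi_j$ by $0$ for $j\notin[L,R]$. The bulk solution space is $\mathcal M_{L,R}=\ker\big(\mathbf P_{L-p',R-q'}\mathbf A|_{\mathcal V_{L,R}}\big)\subseteq\mathcal V_{L,R}$ (an infinite endpoint shifted by a finite amount stays infinite). For finite $L\le R$, $\mathcal V_{L,R}\cong\mathbb C^N\otimes\mathbb C^d$ with $N=R-L+1$, and $A_N=\mathbf P_{L,R}\mathbf A|_{\mathcal V_{L,R}}$ is the banded block-Toeplitz (BBT) matrix with blocks $[A_N]_{ij}=a_{j-i}$; with the bulk projector $P_B=\mathbf P_{L-p',R-q'}|_{\mathcal V_{L,R}}$ one has $\mathcal M_{L,R}=\ker P_BA_N$. *)

(* Scalars: an arbitrary field F (the paper uses C; the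
   statement is purely algebraic). *)
From HB Require Import structures.
From mathcomp Require Import all_boot all_order all_algebra.
Set Implicit Arguments. Unset Strict Implicit. Unset Printing Implicit Defensive.
Import Order.TTheory GRing.Theory Num.Theory.
Local Open Scope ring_scope.

Definition seqV (F : fieldType) (d : nat) := int -> 'cV[F]_d.

Definition is_laurent_bw (F : fieldType) (d : nat) (a : int -> 'M[F]_d)
  (p q : int) : Prop :=
  [/\ p <= q, a p != 0, a q != 0 & forall r : int, (r < p) || (q < r) -> a r = 0].

(* BBL transformation: (A Psi)_j = sum_{r=p}^{q} a_r psi_{j+r}. *)
Definition bbl (F : fieldType) (d : nat) (a : int -> 'M[F]_d) (p q : int)
  (Psi : seqV F d) : seqV F d :=
  fun j => \sum_(k < (`|q - p|%N).+1) a (p + k%:Z) *m Psi (j + (p + k%:Z)).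

Definition kerA (F : fieldType) (d : nat) (a : int -> 'M[F]_d) (p q : int)
  (Psi : seqV F d) : Prop :=
  forall j : int, bbl a p q Psi j = 0.

Definition projLR (F : fieldType) (d : nat) (L R : int) (Psi : seqV F d)
  : seqV F d :=
  fun j => if (L <= j <= R) then Psi j else 0.

Definition inV (F : fieldType) (d : nat) (L R : int) (Psi : seqV F d) : Prop :=
  forall j : int, (j < L) || (R < j) -> Psi j = 0.

Definition pprime (p : int) : int := Order.min p 0.
Definition qprime (q : int) : int := Order.max 0 q.
Definition tau (p q : int) : int := qprime q - pprime p.

(* Bulk solution space M_{L,R} = ker (P_{L-p',R-q'} A |_{V_{L,R}}). *)
Definition inM (F : fieldType) (d : nat) (a : int -> 'M[F]_d) (p q : int)
  (L R : int) (Psi : seqV F d) : Prop :=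
  inV L R Psi /\
  forall j : int, L - pprime p <= j <= R - qprime q -> bbl a p q Psi j = 0.

(* Part (i): on a bulk row every index of the band lies in [L, R], so truncation
   does not change the row.  Part (ii): if a_p and a_q are invertible, a bulk
   solution extends to a solution on all of Z by solving, row after row, the
   first rows outside the bulk for their leftmost entry (through a_p) and the
   last rows for their rightmost entry (through a_q); since R - L >= q - p the
   two recursions never interfere. *)
From HB Require Import structures.
From mathcomp Require Import all_boot all_order all_algebra.
From mathcomp Require Import zify.
From Stdlib Require Import FunctionalExtensionality.
Import Order.TTheory GRing.Theory Num.Theory.
Local Open Scope ring_scope.
Set Implicit Arguments. Unset Strict Implicit.

Lemma unitmx_neq0 (F : fieldType) (n : nat) (A : 'M[F]_n) :
  (0 < n)%N -> A \in unitmx -> A != 0.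
Proof.
case: n A => [//|n] A _; apply: contraTneq => ->.
by rewrite unitmxE det0 unitr0.
Qed.

Section BandedRows.
Variables (F : fieldType) (d : nat) (a : int -> 'M[F]_d) (p q : int).
Hypothesis le_pq : p <= q.

Let K := `|q - p|%N.

Lemma bbl_eq_window (g h : seqV F d) (m : int) :
  (forall i, m + p <= i <= m + q -> g i = h i) -> bbl a p q g m = bbl a p q h m.
Proof.
move=> gh; apply: eq_bigr => k _; congr (_ *m _); apply: gh.
have : (k <= K)%N by rewrite -ltnS.
by rewrite /K; lia.
Qed.

(* The value at [m + p] (resp. [m + q]) that makes row [m] vanish. *)
Definition solve_left (g : seqV F d) (m : int) : 'cV[F]_d :=
  - (invmx (a p) *m \sum_(k < K) a (p + k.+1%:Z) *m g (m + (p + k.+1%:Z))).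

Definition solve_right (g : seqV F d) (m : int) : 'cV[F]_d :=
  - (invmx (a q) *m \sum_(k < K) a (p + k%:Z) *m g (m + (p + k%:Z))).

Lemma solve_left_window (g h : seqV F d) (m : int) :
  (forall i, m + p < i <= m + q -> g i = h i) -> solve_left g m = solve_left h m.
Proof.
move=> gh; congr (- (_ *m _)); apply: eq_bigr => k _; congr (_ *m _); apply: gh.
have : (k < K)%N by [].
by rewrite /K; lia.
Qed.

Lemma solve_right_window (g h : seqV F d) (m : int) :
  (forall i, m + p <= i < m + q -> g i = h i) -> solve_right g m = solve_right h m.
Proof.
move=> gh; congr (- (_ *m _)); apply: eq_bigr => k _; congr (_ *m _); apply: gh.
have : (k < K)%N by [].
by rewrite /K; lia.
Qed.

Lemma bbl_solve_left (g : seqV F d) (m : int) : a p \in unitmx ->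
  bbl a p q g m = a p *m (g (m + p) - solve_left g m).
Proof.
move=> ap_unit; rewrite /bbl big_ord_recl addr0 mulmxBr /solve_left.
by rewrite mulmxN opprK mulmxA mulmxV // mul1mx.
Qed.

Lemma bbl_solve_right (g : seqV F d) (m : int) : a q \in unitmx ->
  bbl a p q g m = a q *m (g (m + q) - solve_right g m).
Proof.
move=> aq_unit; rewrite /bbl big_ord_recr /= mulmxBr /solve_right.
rewrite mulmxN opprK mulmxA mulmxV // mul1mx addrC.
have -> : p + K%:Z = q by rewrite /K; lia.
by [].
Qed.

End BandedRows.

Lemma kerA_projLR_inM (F : fieldType) (d : nat) (a : int -> 'M[F]_d)
    (p q L R : int) (Psi : seqV F d) :
  p <= q -> kerA a p q Psi -> inM a p q L R (projLR L R Psi).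
Proof.
move=> le_pq Psi_ker; split=> j j_out.
  by rewrite /projLR ifF //; apply/negbTE; lia.
move: j_out; rewrite /pprime /qprime => j_bulk.
rewrite -(Psi_ker j); apply: bbl_eq_window => // i i_band.
by rewrite /projLR ifT //; lia.
Qed.

Section BulkExtension.
Variables (F : fieldType) (d : nat) (a : int -> 'M[F]_d) (p q L R : int).

Definition extend_step (g : seqV F d) (n : nat) : seqV F d := fun j =>
  if j == R + n.+1%:Z then solve_right a p q g (j - q)
  else if j == L - n.+1%:Z then solve_left a p q g (j - p) else g j.

Fixpoint extend_iter (Phi : seqV F d) (n : nat) : seqV F d :=
  if n is n'.+1 then extend_step (extend_iter Phi n') n' else Phi.

(* [|j - L| + |j - R|] is merely some number of steps after which [j] is filled. *)
Definition extension (Phi : seqV F d) : seqV F d :=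
  fun j => extend_iter Phi (`|j - L| + `|j - R|)%N j.

Variable Phi : seqV F d.

Lemma extend_iter_stable (n m : nat) (j : int) : (n <= m)%N ->
  L - n%:Z <= j <= R + n%:Z -> extend_iter Phi m j = extend_iter Phi n j.
Proof.
move=> /subnKC <- j_win; elim: (m - n)%N => [|k IH]; first by rewrite addn0.
by rewrite addnS /= /extend_step !ifF ?IH //; apply/eqP; lia.
Qed.

Lemma extensionE (n : nat) (j : int) :
  L - n%:Z <= j <= R + n%:Z -> extension Phi j = extend_iter Phi n j.
Proof.
move=> j_win; rewrite /extension.
set N := (`|j - L| + `|j - R|)%N.
rewrite -(@extend_iter_stable N (maxn N n)) ?leq_maxl //; last by lia.
by rewrite (@extend_iter_stable n) ?leq_maxr.
Qed.

Lemma extension_id (j : int) : L <= j <= R -> extension Phi j = Phi j.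
Proof. by move=> j_LR; rewrite (@extensionE 0) //; lia. Qed.

Lemma projLR_extension : inV L R Phi -> projLR L R (extension Phi) = Phi.
Proof.
move=> Phi_V; apply: functional_extensionality => j; rewrite /projLR.
by case: ifP => j_LR; [rewrite extension_id | rewrite Phi_V //; lia].
Qed.

Hypotheses (le_pq : p <= q) (band_le_bulk : q - p <= R - L).
Hypotheses (ap_unit : a p \in unitmx) (aq_unit : a q \in unitmx).

Lemma extension_left_row (m : int) :
  m < L - p -> bbl a p q (extension Phi) m = 0.
Proof.
move=> m_left; set n := `|(L - m - p - 1)%R|%N.
rewrite bbl_solve_left // (@extensionE n.+1); last by lia.
rewrite /= /extend_step ifF; last by apply/eqP; lia.
rewrite ifT; last by apply/eqP; lia.
rewrite addrK (@solve_left_window F d a p q le_pq _ (extension Phi)) ?subrr ?mulmx0 //.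
by move=> i i_band; rewrite (@extensionE n) //; lia.
Qed.

Lemma extension_right_row (m : int) :
  R - q < m -> bbl a p q (extension Phi) m = 0.
Proof.
move=> m_right; set n := `|(m + q - R - 1)%R|%N.
rewrite bbl_solve_right // (@extensionE n.+1); last by lia.
rewrite /= /extend_step ifT; last by apply/eqP; lia.
rewrite addrK (@solve_right_window F d a p q le_pq _ (extension Phi)) ?subrr ?mulmx0 //.
by move=> i i_band; rewrite (@extensionE n) //; lia.
Qed.

Lemma extension_kerA :
  (forall m, L - p <= m <= R - q -> bbl a p q Phi m = 0) ->
  kerA a p q (extension Phi).
Proof.
move=> Phi_bulk m.
have [m_left|m_ge] := ltrP m (L - p); first exact: extension_left_row.
have [m_right|m_le] := ltrP (R - q) m; first exact: extension_right_row.
rewrite -(Phi_bulk m); last by apply/andP.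
by apply: bbl_eq_window => // i i_band; rewrite extension_id //; lia.
Qed.

End BulkExtension.

Lemma pprime_unit (F : fieldType) (d : nat) (a : int -> 'M[F]_d) (p q : int) :
  (0 < d)%N -> is_laurent_bw a p q -> a (pprime p) \in unitmx -> pprime p = p.
Proof.
move=> d_gt0 [_ _ _ a_out]; have [p_le0 _|p_gt0] := lerP p 0; first by rewrite /pprime; lia.
have -> : pprime p = 0 by rewrite /pprime; lia.
by rewrite a_out ?p_gt0 // => /(unitmx_neq0 d_gt0); rewrite eqxx.
Qed.

Lemma qprime_unit (F : fieldType) (d : nat) (a : int -> 'M[F]_d) (p q : int) :
  (0 < d)%N -> is_laurent_bw a p q -> a (qprime q) \in unitmx -> qprime q = q.
Proof.
move=> d_gt0 [_ _ _ a_out]; have [q_ge0 _|q_lt0] := lerP 0 q; first by rewrite /qprime; lia.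
have -> : qprime q = 0 by rewrite /qprime; lia.
by rewrite a_out ?q_lt0 ?orbT // => /(unitmx_neq0 d_gt0); rewrite eqxx.
Qed.

Unset Implicit Arguments.
Theorem mainTheorem2 (F : fieldType) (d : nat) (a : int -> 'M[F]_d)
  (p q L R : int) :
  (1 <= d)%N ->
  is_laurent_bw a p q ->
  tau p q <= R - L ->
  (forall Psi : seqV F d, kerA a p q Psi -> inM a p q L R (projLR L R Psi)) /\
  (a (pprime p) \in unitmx -> a (qprime q) \in unitmx ->
   forall Phi : seqV F d,
     inM a p q L R Phi <->
     exists Psi : seqV F d, kerA a p q Psi /\ projLR L R Psi = Phi).
Proof.
move=> d_gt0 a_bw tau_le; have [le_pq _ _ _] := a_bw.
have band_le_bulk : q - p <= R - L by move: tau_le; rewrite /tau /pprime /qprime; lia.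
split=> [Psi|ap_unit aq_unit Phi]; first exact: kerA_projLR_inM.
have ep := pprime_unit d_gt0 a_bw ap_unit.
have eq' := qprime_unit d_gt0 a_bw aq_unit.
split=> [[Phi_V Phi_bulk]|[Psi [Psi_ker <-]]]; last exact: kerA_projLR_inM.
rewrite ep eq' in ap_unit aq_unit Phi_bulk.
exists (extension a p q L R Phi); split; last exact: projLR_extension.
exact: extension_kerA.
Qed.
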